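(* For every $d\in(0,1]$ there is $\varepsilon_0>0$ such that for every $\varepsilon\in(0,\varepsilon_0]$ there is $r_0$ such that for every $r\ge r_0$ there is $\zeta_0>0$ such that for every $\zeta\in(0,\zeta_0]$ there is $n_0$ such that the following holds for all $n\ge n_0$. Let $G$ be an $n$-vertex graph with a partition $V(G)=V_1\sqcup\dots\sqcup V_r$ satisfying $\big||V_i|-|V_j|\big|\le1$ for all $i,j$, and let $R$ be the $(\varepsilon,d)$-reduced graph of $G$ with respect to this partition. Suppose $R$ is connected and non-bipartite. Then there is an odd integer $L\le 2r$ such that for all $i,j\in V(R)$ (not necessarily distinct) and all sets $X\subseteq V_i$ with $|X|\ge d|V_i|$ and $Y\subseteq V_j$ with $|Y|\ge d|V_j|$, $G$ contains at least $\zeta n^{L+1}$ paths of length $L$ starting in $X$ and ending in $Y$.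
   Context: For nonempty disjoint vertex sets $X,Y$ of a graph $G$, the density is $d_G(X,Y)=e_G(X,Y)/(|X||Y|)$. A pair $(A,B)$ of disjoint nonempty vertex sets is $\varepsilon$-regular if $|d_G(A,B)-d_G(A',B')|\le\varepsilon$ for all $A'\subseteq A$, $B'\subseteq B$ with $|A'|\ge\varepsilon|A|$, $|B'|\ge\varepsilon|B|$. Given a partition $V(G)=V_1\sqcup\dots\sqcup V_r$, the $(\varepsilon,d)$-reduced graph $R$ has vertex set $[r]$, with $ij\in E(R)$ iff $(V_i,V_j)$ is $\varepsilon$-regular of density at least $d$. The length of a path is its number of edges; paths are counted as sequences of distinct vertices. *)

From HB Require Import structures.
From mathcomp Require Import all_boot all_order all_algebra.
From mathcomp Require Import boolp reals.
Set Implicit Arguments. Unset Strict Implicit. Unset Printing Implicit Defensive.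
Import Order.TTheory GRing.Theory Num.Theory.
Local Open Scope ring_scope.

Section Defs.
Variable R : realType.
Variable T : finType.
Variable e : rel T.

Definition edges_between (X Y : {set T}) : nat :=
  #|[set p : T * T | [&& p.1 \in X, p.2 \in Y & e p.1 p.2]]|.

Definition density (X Y : {set T}) : R :=
  (edges_between X Y)%:R / (#|X| * #|Y|)%:R.

Definition eps_regular (eps : R) (A B : {set T}) : Prop :=
  forall A' B' : {set T}, A' \subset A -> B' \subset B ->
    eps * #|A|%:R <= #|A'|%:R -> eps * #|B|%:R <= #|B'|%:R ->
    `|density A B - density A' B'| <= eps.

Definition reduced_adj (r : nat) (V : 'I_r -> {set T}) (eps d : R)
    (i j : 'I_r) : Prop :=
  i != j /\ eps_regular eps (V i) (V j) /\ d <= density (V i) (V j).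

Definition reduced_rel (r : nat) (V : 'I_r -> {set T}) (eps d : R) : rel 'I_r :=
  fun i j => `[< reduced_adj V eps d i j >].

Definition num_paths (L : nat) (X Y : {set T}) : nat :=
  #|[set f : {ffun 'I_L.+1 -> T} |
      [&& injectiveb f,
          [forall k : 'I_L, e (f (widen_ord (leqnSn L) k)) (f (lift ord0 k))],
          f ord0 \in X & f ord_max \in Y]]|.
End Defs.

Definition rel_connected (r : nat) (E : rel 'I_r) : Prop :=
  forall i j : 'I_r, connect E i j.

Definition rel_bipartite (r : nat) (E : rel 'I_r) : Prop :=
  exists c : 'I_r -> bool, forall i j, E i j -> c i != c j.

(* Since the reduced graph is connected and not bipartite, its bipartite
   double cover links (i, even) to (j, odd); a self-avoiding such walk has
   odd length below 2r, and walking back and forth along an edge pads it to the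
   fixed odd length L = 2r - 1.  Following this walk backwards from Y,
   regularity of each pair of consecutive clusters yields in every cluster a
   set of at least (1 - eps)|V_i| vertices, each with at least (d - eps)|Z'|
   neighbours in the set Z' chosen in the next cluster.  Extending
   paths greedily through these sets while avoiding the at most L vertices
   already used gives beta^L paths from each vertex of X in the first set,
   with beta = d^2 n / 8r, hence at least beta^(L+1) paths in total. *)

From HB Require Import structures.
From mathcomp Require Import all_boot all_order all_algebra.
From mathcomp Require Import boolp reals ring lra.
Import Order.TTheory GRing.Theory Num.Theory.
Local Open Scope ring_scope.
Set Implicit Arguments. Unset Strict Implicit.

Section Density.
Variables (R : realType) (T : finType) (e : rel T).

Definition nbhd (Z : {set T}) (v : T) : {set T} := [set w in Z | e v w].

Lemma edges_betweenE (A B : {set T}) :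
  edges_between e A B = (\sum_(x in A) #|nbhd B x|)%N.
Proof.
rewrite /edges_between -sum1_card.
rewrite (eq_bigr (fun x => \sum_(y | (y \in B) && e x y) 1)%N); last first.
  by move=> x _; rewrite -sum1_card; apply: eq_bigl => y; rewrite inE.
by rewrite pair_big_dep; apply: eq_bigl => -[x y]; rewrite !inE.
Qed.

Hypothesis e_sym : symmetric e.

Lemma edges_betweenC (A B : {set T}) : edges_between e A B = edges_between e B A.
Proof.
rewrite /edges_between -(card_imset _ (can_inj (@swap_pairK T T))).
rewrite (can2_imset_pre _ (@swap_pairK T T) (@swap_pairK T T)).
by apply: eq_card => -[x y]; rewrite !inE /= e_sym andbCA.
Qed.

Lemma densityC (A B : {set T}) : density R e A B = density R e B A.
Proof. by rewrite /density edges_betweenC mulnC. Qed.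

Lemma eps_regularC (eps : R) (A B : {set T}) :
  eps_regular e eps A B -> eps_regular e eps B A.
Proof.
move=> regAB B' A' sB sA hB hA.
by rewrite densityC [density _ _ B' _]densityC; apply: regAB.
Qed.

Lemma reduced_rel_sym r (V : 'I_r -> {set T}) (eps d : R) :
  symmetric (reduced_rel e V eps d).
Proof.
suff imp i j : reduced_rel e V eps d i j -> reduced_rel e V eps d j i.
  by move=> i j; apply/idP/idP; apply: imp.
move=> /asboolP [nij [reg dd]]; apply/asboolP; split; first by rewrite eq_sym.
by split; [apply: eps_regularC | rewrite densityC].
Qed.

End Density.

Section Regularity.
Variables (R : realType) (T : finType) (e : rel T).

Lemma density_lt (B Z : {set T}) (c : R) : B != set0 ->
  (forall x, x \in B -> #|nbhd e Z x|%:R < c * #|Z|%:R) -> density R e B Z < c.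
Proof.
case/set0Pn => x0 x0B low.
have Z_gt0 : 0 < #|Z|%:R :> R.
  rewrite ltr0n lt0n; apply: contraTneq (low x0 x0B) => ->.
  by rewrite mulr0 ltNge ler0n.
have B_gt0 : 0 < #|B|%:R :> R by rewrite ltr0n card_gt0; apply/set0Pn; exists x0.
rewrite /density edges_betweenE natr_sum natrM ltr_pdivrMr ?mulr_gt0 //.
rewrite mulrCA -sum1_card natr_sum mulr_suml; apply: ltr_sum => [|x xB].
  by apply/hasP; exists x0; rewrite ?mem_index_enum.
by rewrite mul1r low.
Qed.

Lemma regular_typical_degree (eps d : R) (A B Z : {set T}) : 0 <= eps ->
  eps_regular e eps A B -> d <= density R e A B ->
  Z \subset B -> eps * #|B|%:R <= #|Z|%:R ->
  (1 - eps) * #|A|%:R <=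
    #|[set v in A | (d - eps) * #|Z|%:R <= #|nbhd e Z v|%:R]|%:R.
Proof.
move=> eps_ge0 reg dens sZB hZ; set good := [set v in A | _].
have sgA : good \subset A by apply/subsetP => x; rewrite inE => /andP [].
have cardA : #|A|%:R = #|good|%:R + #|A :\: good|%:R :> R.
  by rewrite -natrD -(cardsID good A) (setIidPr sgA).
suff few_bad : #|A :\: good|%:R <= eps * #|A|%:R.
  by move: few_bad; rewrite cardA mulrBl mul1r; lra.
rewrite leNgt; apply/negP => many_bad.
have bad0 : A :\: good != set0.
  by rewrite -card_gt0 -(ltr0n R) (le_lt_trans _ many_bad) ?mulr_ge0.
have := reg _ _ (subsetDl A good) sZB (ltW many_bad) hZ.
rewrite ler_norml => /andP [_]; apply/negP; rewrite -ltNge ltrBrDl -ltrBrDr.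
apply: lt_le_trans (density_lt (c := d - eps) bad0 _) _ => [x|]; last by rewrite lerD2r.
by rewrite !inE => /andP [/negP + xA]; rewrite xA /= ltNge => /negP.
Qed.

End Regularity.

Section Walks.
Variables (r : nat) (E : rel 'I_r).

Fixpoint walkn (l : nat) (i j : 'I_r) : bool :=
  if l is l'.+1 then [exists k, E i k && walkn l' k j] else i == j.

(* Walks in the bipartite double cover: the boolean coordinate records the
   parity of the length. *)
Definition double_cover : rel ('I_r * bool) :=
  fun x y => E x.1 y.1 && (y.2 == ~~ x.2).

Lemma connect_double_cover i j :
  connect E i j -> exists c, forall b, connect double_cover (i, b) (j, b (+) c).
Proof.
case/connectP => p; elim: p i => [|k p IH] i /=.
  by move=> _ ->; exists false => b; rewrite addbF.
case/andP => Eik pth Ej; have [c Hc] := IH k pth Ej.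
exists (~~ c) => b; rewrite addbN -addNb.
by apply: connect_trans (connect1 _) (Hc _); rewrite /double_cover /= Eik eqxx.
Qed.

Lemma double_cover_walkn x p : path double_cover x p ->
  walkn (size p) x.1 (last x p).1 && ((last x p).2 == x.2 (+) odd (size p)).
Proof.
elim: p x => [|y p IH] x /=; first by rewrite addbF !eqxx.
case/andP => /andP [Exy /eqP ey] /IH /andP [Wy /eqP ->].
by rewrite ey addNb -addbN eqxx andbT; apply/existsP; exists y.1; rewrite Exy.
Qed.

Hypothesis E_connected : forall i j, connect E i j.
Hypothesis E_not_bipartite : ~ (exists c : 'I_r -> bool, forall i j, E i j -> c i != c j).

(* Otherwise the vertices reached from (i, false) with even parity would
   give a proper 2-colouring. *)
Lemma connect_double_cover_odd i j : connect double_cover (i, false) (j, true).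
Proof.
set reach := fun x b => connect double_cover (i, false) (x, b).
have reach_other x y b : E x y -> reach x b -> reach y (~~ b).
  move=> Exy Hx; apply: connect_trans Hx (connect1 _).
  by rewrite /double_cover /= Exy eqxx.
have reach_some x : exists b, reach x b.
  by have [c Hc] := connect_double_cover (E_connected i x); exists c; apply: Hc.
have [x [x0 x1]] : exists x, reach x false /\ reach x true.
  apply: contrapT => none; apply: E_not_bipartite.
  exists (reach ^~ false) => a b Eab; apply/negP => /eqP same.
  have [ba Ha] := reach_some a; have Hb := reach_other _ _ _ Eab Ha.
  case: ba Ha Hb => Ha Hb; apply: none.
  - by exists a; rewrite same.
  - by exists b; rewrite -same.
have [c Hc] := connect_double_cover (E_connected x j).
have := Hc (~~ c); rewrite addNb addbb /=.
by case: c {Hc} => H; [apply: connect_trans x0 H | apply: connect_trans x1 H].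
Qed.

Lemma odd_walkn i j : exists2 l, odd l && (l < 2 * r)%N & walkn l i j.
Proof.
case/connectP: (connect_double_cover_odd i j) => p pth lst.
case/shortenP: pth lst => p' pth' uq _ lst.
have /andP [Wl ol] := double_cover_walkn pth'.
exists (size p'); last by rewrite -lst in Wl.
move: ol; rewrite -lst /= => /eqP <- /=.
have := max_card (mem ((i, false) :: p')).
by rewrite (card_uniqP uq) card_prod card_ord card_bool mulnC.
Qed.

Hypothesis E_sym : symmetric E.

Lemma walkn_add2 l i j k : E j k -> walkn l i j -> walkn l.+2 i j.
Proof.
move=> Ejk; elim: l i => [|l IH] i /=.
  move/eqP => ->; apply/existsP; exists k; rewrite Ejk /=.
  by apply/existsP; exists j; rewrite E_sym Ejk eqxx.
by case/existsP => k' /andP [Eik' /IH Wl]; apply/existsP; exists k'; rewrite Eik'.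
Qed.

Lemma walkn_pred_double i j : walkn (2 * r)%N.-1 i j.
Proof.
have [l /andP [ol lr] Wl] := odd_walkn i j.
have [[|l'] /andP [ol' _]] := odd_walkn j j => //= /existsP [k /andP [Ejk _]].
have r_gt0 : (0 < r)%N := leq_ltn_trans (leq0n i) (ltn_ord i).
have l_le : (l <= (2 * r).-1)%N by rewrite -ltnS prednK ?muln_gt0.
have [m ->] : exists m, (2 * r).-1 = (l + 2 * m)%N.
  have even_gap : ~~ odd ((2 * r).-1 - l).
    by rewrite oddB // ol -subn1 oddB ?oddM // muln_gt0.
  have := odd_double_half ((2 * r).-1 - l).
  rewrite (negbTE even_gap) add0n -mul2n => half_gap.
  by exists (((2 * r).-1 - l)./2); rewrite half_gap subnKC.
elim: m => [|m IH]; first by rewrite addn0.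
by rewrite mulnS addnCA add2n; apply: walkn_add2 Ejk _.
Qed.
End Walks.

Section PathCounting.
Variables (R : realType) (T : finType) (e : rel T).

Definition avoiding_path (U Y : {set T}) (v : T) (l : nat) (s : seq T) : bool :=
  [&& size s == l, path e v s, uniq (v :: s), all (fun x => x \notin U) (v :: s)
    & last v s \in Y].

(* The forbidden set U keeps the paths self-avoiding when they are later
   extended backwards, one vertex at a time, up to total length m. *)
Definition path_rich (Z Y : {set T}) (l m : nat) (beta : R) : Prop :=
  forall v, v \in Z -> forall U : {set T}, v \notin U -> (#|U| + l <= m)%N ->
  exists ss : seq (seq T),
    [/\ uniq ss, all (avoiding_path U Y v l) ss & beta ^+ l <= (size ss)%:R].

Lemma path_rich0 (Y : {set T}) m beta : path_rich Y Y 0 m beta.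
Proof.
move=> v vY U vU _; exists [:: [::]]; split; rewrite ?expr0 //.
by rewrite /avoiding_path /= vU vY.
Qed.

Lemma path_rich_lists (Z Y U : {set T}) l m beta :
  path_rich Z Y l m beta -> (#|U| + l <= m)%N ->
  exists f : T -> seq (seq T), forall w, w \in Z :\: U ->
    [/\ uniq (f w), all (avoiding_path U Y w l) (f w) & beta ^+ l <= (size (f w))%:R].
Proof.
move=> rich hU.
suff lists w : exists ss : seq (seq T), w \in Z :\: U ->
    [/\ uniq ss, all (avoiding_path U Y w l) ss & beta ^+ l <= (size ss)%:R].
  by have [f fP] := choice lists; exists f.
case: (boolP (w \in Z :\: U)) => [|_]; last by exists [::].
by rewrite inE => /andP [wU wZ]; have [ss ssP] := rich w wZ U wU hU; exists ss.
Qed.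

Definition cons_lists (A : {set T}) (f : T -> seq (seq T)) : seq (seq T) :=
  [seq w :: s | w <- enum A, s <- f w].

Lemma cons_lists_uniq (A : {set T}) f :
  {in A, forall w, uniq (f w)} -> uniq (cons_lists A f).
Proof.
move=> uf; apply: allpairs_uniq_dep; first exact: enum_uniq.
  by move=> w; rewrite mem_enum => /uf.
by move=> [w1 s1] [w2 s2] _ _ /= [-> ->].
Qed.

Lemma size_cons_lists (A : {set T}) f (b : R) :
  {in A, forall w, b <= (size (f w))%:R} -> #|A|%:R * b <= (size (cons_lists A f))%:R.
Proof.
move=> bf; rewrite size_allpairs_dep sumnE big_map natr_sum.
rewrite -sum1_card natr_sum mulr_suml big_enum_cond /= big_mkcond [X in _ <= X]big_mkcond.
apply: ler_sum => w _; case: ifP => // wA.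
by rewrite mul1r bf.
Qed.

Lemma avoiding_path_cons (U Y : {set T}) v w l s :
  v \notin U -> e v w -> avoiding_path (v |: U) Y w l s -> avoiding_path U Y v l.+1 (w :: s).
Proof.
move=> vU evw /and5P [/eqP sz pth uq /allP avoid lst].
have avoidU x : x \in w :: s -> (x \notin U) && (x != v).
  by move/avoid; rewrite !inE negb_or andbC.
have vws : v \notin w :: s by apply/negP => /avoidU; rewrite eqxx andbF.
have allU : all (fun x => x \notin U) (w :: s) by apply/allP => x /avoidU /andP [].
rewrite /avoiding_path /= sz evw pth lst eqxx vU vws.
by move: uq allU => /= -> ->.
Qed.

Lemma path_rich_cons (Z' Z Y : {set T}) l m (beta : R) : 0 <= beta ->
  (forall v, v \in Z' -> beta + m%:R <= #|nbhd e Z v|%:R) ->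
  path_rich Z Y l m beta -> path_rich Z' Y l.+1 m beta.
Proof.
move=> beta_ge0 deg rich v vZ' U vU hU.
have hU' : (#|v |: U| + l <= m)%N by rewrite cardsU1 vU add1n addSn -addnS.
have [f fP] := path_rich_lists rich hU'.
set A := nbhd e Z v :\: (v |: U).
have sAZ : A \subset Z :\: (v |: U).
  by apply: setSD; apply/subsetP => w; rewrite inE => /andP [].
exists (cons_lists A f); split.
- by apply: cons_lists_uniq => w /(subsetP sAZ) /fP [].
- apply/allP => t /allpairsPdep [w [s [wA sf ->]]]; rewrite mem_enum in wA.
  have [_ /allP avoid _] := fP w (subsetP sAZ w wA).
  move: wA; rewrite !inE => /andP [_ /andP [_ evw]].
  exact: avoiding_path_cons (avoid s sf).
- apply: le_trans (size_cons_lists (b := beta ^+ l) _); last first.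
    by move=> w /(subsetP sAZ) /fP [].
  rewrite exprS ler_wpM2r ?exprn_ge0 //.
  have : (#|nbhd e Z v| <= #|A| + m)%N.
    rewrite -(cardsID (v |: U) (nbhd e Z v)) addnC leq_add2l.
    exact: leq_trans (subset_leq_card (subsetIr _ _)) (leq_trans (leq_addr _ _) hU').
  by rewrite -(ler_nat R) natrD => /(le_trans (deg v vZ')); rewrite lerD2r.
Qed.

Definition path_in (L : nat) (X Y : {set T}) (t : seq T) : bool :=
  if t is x :: s then (x \in X) && avoiding_path set0 Y x L s else false.

Lemma size_path_in L X Y t : path_in L X Y t -> size t = L.+1.
Proof. by case: t => // x s /andP [_ /and5P [/eqP /= ->]]. Qed.

Lemma size_le_num_paths L X Y (ss : seq (seq T)) :
  uniq ss -> all (path_in L X Y) ss -> (size ss <= num_paths e L X Y)%N.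
Proof.
case: ss => [//|[|x0 s0] ss] uq /allP ok; first by have := ok _ (mem_head _ _).
pose F (t : seq T) : {ffun 'I_L.+1 -> T} := [ffun k : 'I_L.+1 => nth x0 t k].
rewrite /num_paths -(size_map F) cardE; apply: uniq_leq_size.
  rewrite (map_inj_in_uniq _) // => t1 t2 /ok/size_path_in s1 /ok/size_path_in s2 eqF.
  apply: (eq_from_nth (x0 := x0)); rewrite s1 ?s2 // => k kL.
  by have := congr1 (fun g : {ffun 'I_L.+1 -> T} => g (Ordinal kL)) eqF; rewrite !ffunE.
move=> g /mapP [[|x s] /ok //= /andP [xX /and5P [/eqP sz pth uq' _ lst]] ->].
rewrite mem_enum inE; apply/and4P; split.
- apply/injectiveP => k1 k2; rewrite !ffunE => /eqP.
  by rewrite nth_uniq /= ?sz ?ltn_ord // => /eqP /val_inj.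
- apply/forallP => k; rewrite !ffunE /= add0n.
  by apply: (pathP x0 pth); rewrite sz.
- by rewrite ffunE.
- by rewrite ffunE /=; move: lst; rewrite (last_nth x0) sz.
Qed.

Lemma num_paths_ge_path_rich L (X Z Y : {set T}) (beta : R) : 0 <= beta ->
  path_rich Z Y L L beta -> #|X :&: Z|%:R * beta ^+ L <= (num_paths e L X Y)%:R.
Proof.
move=> beta_ge0 rich.
have no_forbidden : (#|@set0 T| + L <= L)%N by rewrite cards0.
have [f fP] := path_rich_lists rich no_forbidden.
have sXZ : X :&: Z \subset Z :\: set0 by rewrite setD0 subsetIr.
apply: le_trans (size_cons_lists (f := f) _) _.
  by move=> w /(subsetP sXZ) /fP [].
rewrite ler_nat size_le_num_paths //.
  by apply: cons_lists_uniq => w /(subsetP sXZ) /fP [].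
apply/allP => t /allpairsPdep [w [s [wA sf ->]]]; rewrite mem_enum in wA.
have [_ /allP avoid _] := fP w (subsetP sXZ w wA).
by move: wA; rewrite inE => /andP [wX _]; rewrite /= wX avoid.
Qed.

End PathCounting.

Section Clusters.
Variables (T : finType) (e : rel T) (r : nat) (V : 'I_r -> {set T}).

Section Counting.
Variable R : realType.

Lemma path_rich_along_walk (eps d delta beta : R) m :
  0 <= eps -> eps <= delta -> delta <= 1 - eps -> eps <= d -> 0 <= beta ->
  (forall k, beta + m%:R <= (d - eps) * (delta * #|V k|%:R)) ->
  forall l i j, walkn (reduced_rel e V eps d) l i j ->
  forall Y : {set T}, Y \subset V j -> delta * #|V j|%:R <= #|Y|%:R ->
  exists Z : {set T}, [/\ Z \subset V i, delta * #|V i|%:R <= #|Z|%:R,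
    (0 < l)%N -> (1 - eps) * #|V i|%:R <= #|Z|%:R & path_rich e Z Y l m beta].
Proof.
move=> eps_ge0 eps_delta delta_le eps_d beta_ge0 room.
elim => [|l IH] i j /=.
  by move/eqP => <- Y sY hY; exists Y; split => //; apply: path_rich0.
case/existsP => k /andP [/asboolP [_ [reg dens]] walk] Y sY hY.
have [Z [sZ hZ _ rich]] := IH k j walk Y sY hY.
have hZeps : eps * #|V k|%:R <= #|Z|%:R.
  by apply: le_trans hZ; rewrite ler_wpM2r.
have typical := regular_typical_degree eps_ge0 reg dens sZ hZeps.
exists [set v in V i | (d - eps) * #|Z|%:R <= #|nbhd e Z v|%:R]; split => //.
- by apply/subsetP => x; rewrite inE => /andP [].
- by apply: le_trans typical; rewrite ler_wpM2r.
- apply: path_rich_cons beta_ge0 _ rich => v; rewrite inE => /andP [_].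
  apply: le_trans; apply: le_trans (room k) _.
  by rewrite ler_wpM2l ?subr_ge0.
Qed.

Lemma num_paths_along_walk (eps d delta beta : R) L i j (X Y : {set T}) :
  0 <= eps -> eps <= delta -> delta <= 1 - eps -> eps <= d -> 0 <= beta ->
  (forall k, beta + L%:R <= (d - eps) * (delta * #|V k|%:R)) ->
  (0 < L)%N -> walkn (reduced_rel e V eps d) L i j ->
  X \subset V i -> Y \subset V j ->
  d * #|V i|%:R <= #|X|%:R -> delta * #|V j|%:R <= #|Y|%:R ->
  beta ^+ L.+1 <= (num_paths e L X Y)%:R.
Proof.
move=> eps_ge0 eps_delta delta_le eps_d beta_ge0 room L_gt0 walk sX sY hX hY.
have [Z [sZ _ hZ rich]] :=
  path_rich_along_walk eps_ge0 eps_delta delta_le eps_d beta_ge0 room walk sY hY.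
have {}hZ := hZ L_gt0.
have hXZ : (#|X| + #|Z| <= #|X :&: Z| + #|V i|)%N.
  by rewrite -cardsUI addnC leq_add2l subset_leq_card // subUset sX.
have beta_le : beta <= #|X :&: Z|%:R.
  have delta_room : (d - eps) * (delta * #|V i|%:R) <= (d - eps) * #|V i|%:R.
    by rewrite ler_wpM2l ?subr_ge0 // ler_piMl //; lra.
  have := room i; have := ler0n R L; move: hXZ hX hZ; rewrite -(ler_nat R) !natrD.
  lra.
apply: le_trans (num_paths_ge_path_rich X beta_ge0 rich).
by rewrite exprSr mulrC ler_wpM2r ?exprn_ge0.
Qed.

End Counting.

Lemma card_le_balanced_cover :
  (forall x, exists i, x \in V i) -> (forall i j, #|V i| <= #|V j| + 1)%N ->
  forall i, (#|T| <= r * (#|V i| + 1))%N.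
Proof.
move=> cover balanced i.
apply: (@leq_trans (\sum_(k < r) #|V k|)%N).
  rewrite -sum1_card (partition_big (fun x => xchoose (cover x)) predT) //=.
  apply: leq_sum => k _; rewrite sum1dep_card subset_leq_card //.
  by apply/subsetP => x; rewrite inE => /eqP <-; exact: (xchooseP (cover x)).
apply: (@leq_trans (\sum_(k < r) (#|V i| + 1))%N).
  by apply: leq_sum => k _; apply: balanced.
by rewrite sum_nat_const card_ord.
Qed.

Lemma card_balanced_cover_ge (R : realType) : (0 < r)%N ->
  (forall x, exists i, x \in V i) -> (forall i j, #|V i| <= #|V j| + 1)%N ->
  forall i, #|T|%:R / r%:R - 1 <= #|V i|%:R :> R.
Proof.
move=> r_gt0 cover balanced i.
rewrite lerBlDr ler_pdivrMr ?ltr0n // mulrC natr1 -natrM ler_nat -addn1.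
exact: card_le_balanced_cover.
Qed.

End Clusters.

Lemma path_budget (R : realFieldType) (d eps v : R) (n r L : nat) :
  0 < d <= 1 -> 0 <= eps <= d / 4 -> (0 < r)%N ->
  n%:R / r%:R - 1 <= v -> 4 * L.+1%:R <= d ^+ 2 * (n%:R / r%:R) ->
  d ^+ 2 / (8 * r%:R) * n%:R + L%:R <= (d - eps) * (d / 2 * v).
Proof.
move=> /andP [d_gt0 d_le1] /andP [eps_ge0 eps_le] r_gt0 hv hq.
rewrite (_ : _ * n%:R = d ^+ 2 / 8 * (n%:R / r%:R)); last first.
  by field; rewrite pnatr_eq0 -lt0n.
move: hv hq; set q := n%:R / r%:R => hv hq.
rewrite -subr_ge0 in eps_le.
have d2_le1 : d ^+ 2 <= 1 by rewrite expr_le1 // ltW.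
have L1 : 1 <= L.+1%:R :> R by rewrite ler1n.
have d2_gt0 : 0 < d ^+ 2 by rewrite exprn_gt0.
have q_gt0 : 0 < q by rewrite -(pmulr_rgt0 _ d2_gt0); lra.
have v_ge0 : 0 <= v by have := ler_piMl (ltW q_gt0) d2_le1; lra.
have three_eighths : 3 / 8 * (d ^+ 2 * v) <= (d - eps) * (d / 2 * v).
  have := mulr_ge0 (mulr_ge0 (ltW d_gt0) v_ge0) eps_le.
  rewrite expr2; nra.
have : d ^+ 2 * (q - 1) <= d ^+ 2 * v by rewrite ler_wpM2l ?sqr_ge0.
move: hq; rewrite -natr1; lra.
Qed.

Lemma ratio_ge_of_truncn_lt (R : realType) (d : R) (r n : nat) : 0 < d -> (0 < r)%N ->
  (Num.truncn (8 * r%:R ^+ 2 / d ^+ 2) < n)%N -> 4 * (2 * r)%:R <= d ^+ 2 * (n%:R / r%:R).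
Proof.
move=> d_gt0 r_gt0 n_large.
have : 8 * r%:R ^+ 2 / d ^+ 2 < n%:R.
  by apply: lt_le_trans (truncnS_gt _) _; rewrite ler_nat.
rewrite ltr_pdivrMr ?exprn_gt0 // natrM [d ^+ 2 * _]mulrA ler_pdivlMr ?ltr0n // expr2.
nra.
Qed.

Theorem lemma2p12 (R : realType) :
  forall d : R, 0 < d <= 1 ->
  exists eps0 : R, 0 < eps0 /\
  forall eps : R, 0 < eps <= eps0 ->
  exists r0 : nat, forall r : nat, (r0 <= r)%N ->
  exists zeta0 : R, 0 < zeta0 /\
  forall zeta : R, 0 < zeta <= zeta0 ->
  exists n0 : nat, forall n : nat, (n0 <= n)%N ->
  forall (T : finType) (e : rel T) (V : 'I_r -> {set T}),
    #|T| = n -> symmetric e -> irreflexive e ->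
    (forall i j : 'I_r, i != j -> [disjoint V i & V j]) ->
    (forall x : T, exists i : 'I_r, x \in V i) ->
    (forall i j : 'I_r, (#|V i| <= #|V j| + 1)%N) ->
    rel_connected (reduced_rel e V eps d) ->
    ~ rel_bipartite (reduced_rel e V eps d) ->
  exists L : nat, odd L /\ (L <= 2 * r)%N /\
    forall (i j : 'I_r) (X Y : {set T}),
      X \subset V i -> Y \subset V j ->
      d * #|V i|%:R <= #|X|%:R -> d * #|V j|%:R <= #|Y|%:R ->
      zeta * n%:R ^+ L.+1 <= (num_paths e L X Y)%:R.
Proof.
move=> d /andP [d_gt0 d_le1]; exists (d / 4); split; first lra.
move=> eps /andP [eps_gt0 eps_le]; exists 1%N => r r_gt0.
pose a := d ^+ 2 / (8 * r%:R).
exists (a ^+ (2 * r)); split => [|zeta /andP [zeta_gt0 zeta_le]].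
  by rewrite exprn_gt0 // divr_gt0 ?exprn_gt0 ?mulr_gt0 ?ltr0n.
exists (Num.truncn (8 * r%:R ^+ 2 / d ^+ 2)).+1.
move=> n n_large T e V cardT e_sym _ _ cover balanced conn nonbip.
pose L := (2 * r).-1%N.
have LS : L.+1 = (2 * r)%N by rewrite prednK ?muln_gt0.
exists L; split; first by rewrite /L -subn1 oddB ?oddM ?muln_gt0.
split => [|i j X Y sX sY hX hY]; first exact: leq_pred.
have room k : a * n%:R + L%:R <= (d - eps) * (d / 2 * #|V k|%:R).
  apply: path_budget; rewrite ?d_gt0 ?(ltW eps_gt0) // ?LS.
    by rewrite -cardT; exact: card_balanced_cover_ge.
  exact: ratio_ge_of_truncn_lt.
have walk := walkn_pred_double (r := r) conn nonbip (reduced_rel_sym e_sym V eps d) i j.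
have hY' : d / 2 * #|V j|%:R <= #|Y|%:R.
  by apply: le_trans hY; rewrite ler_wpM2r //; lra.
have beta_ge0 : 0 <= a * n%:R by rewrite mulr_ge0 // /a divr_ge0 ?sqr_ge0 ?mulr_ge0.
have L_gt0 : (0 < L)%N by rewrite -ltnS LS leq_pmulr.
apply: le_trans (num_paths_along_walk _ _ _ _ beta_ge0 room L_gt0 walk sX sY hX hY');
  try lra.
by rewrite LS exprMn ler_wpM2r ?exprn_ge0 ?ler0n.
Qed.
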